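(* Fix $C,\mu_0,d,f_0\in\mathbb{R}$ and $a,b\in[-\infty,\infty]$ with $a<0<b$, and let $\mu:(a,b)\to\mathbb{R}$ solve the ODE $\mu'(x)-\mu(x)^2=C$, $\mu(0)=\mu_0$. Define $f,g:(a,b)\to\mathbb{R}$ by $$f(x):=d\int_0^x\exp\Big(2\int_0^y\mu(z)\,\mathrm{d}z\Big)\mathrm{d}y+f_0,\qquad g(x):=\exp\Big(-\int_0^x\mu(z)\,\mathrm{d}z\Big).$$ Then there exist $e_1,e_2,e_3\in\mathbb{R}$ such that $f'(x)=e_1f(x)^2+e_2f(x)+e_3$ on $(a,b)$ with $f(0)=f_0$, and $g$ solves $-g''(x)=Cg(x)$ on $(a,b)$ with $g(0)=1$, $g'(0)=-\mu_0$. *)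

From Stdlib Require Import Reals.
From Coquelicot Require Import Coquelicot.
Open Scope R_scope.

Definition in_open (a b : Rbar) (x : R) : Prop := Rbar_lt a x /\ Rbar_lt x b.

(* Put M(x) = ∫_0^x μ.  Along a solution of μ' = μ² + C the quantity
   (μ² + C) e^{-2M} is constant, so μ' = K e^{2M} = (K/d) f' with K = μ(0)² + C
   (if d = 0, f is constant).  Hence μ - (K/d) f is constant, i.e. μ is an
   affine function of f, and since f'' = 2 μ f' the derivative f' = d e^{2M} is
   a quadratic polynomial in f.
   For g = e^{-M} one has g' = -μ g and then g'' = -(μ² + C) g + μ² g = -C g. *)

From Stdlib Require Import Reals Lra.
From Coquelicot Require Import Coquelicot.
Open Scope R_scope.

Lemma is_derive_eq (h : R -> R) (x l l' : R) :
  is_derive h x l' -> l' = l -> is_derive h x l.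
Proof. intros H <-. exact H. Qed.

Lemma is_derive_exp_comp (h : R -> R) (x l : R) :
  is_derive h x l -> is_derive (fun t => exp (h t)) x (l * exp (h x)).
Proof. intro H. exact (is_derive_comp exp h x _ l (is_derive_exp _) H). Qed.

Lemma in_open_locally (a b : Rbar) (x : R) :
  in_open a b x -> locally x (in_open a b).
Proof. exact (open_and _ _ (open_Rbar_gt a) (open_Rbar_lt b) x). Qed.

Lemma in_open_between (a b : Rbar) (x y z : R) :
  in_open a b x -> in_open a b y -> Rmin x y <= z <= Rmax x y -> in_open a b z.
Proof.
  unfold in_open, Rmin, Rmax. intros [Hax Hxb] [Hay Hyb] Hz.
  destruct (Rle_dec x y), a, b; simpl in *; intuition lra.
Qed.

Lemma in_open_derive0_eq (a b : Rbar) (h : R -> R) (x y : R) :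
  (forall t, in_open a b t -> is_derive h t 0) ->
  in_open a b x -> in_open a b y -> h x = h y.
Proof.
  intros Hd Hx Hy.
  assert (Hseg : forall u v, in_open a b u -> in_open a b v -> u < v -> h u = h v).
  { intros u v Hu Hv Huv. apply (eq_is_derive h u v); [|exact Huv].
    intros t Ht. apply Hd, (in_open_between a b u v t Hu Hv).
    unfold Rmin, Rmax; destruct (Rle_dec u v); lra. }
  destruct (Rtotal_order x y) as [Hlt|[->|Hgt]].
  - exact (Hseg x y Hx Hy Hlt).
  - reflexivity.
  - symmetry. exact (Hseg y x Hy Hx Hgt).
Qed.

Lemma in_open_is_derive_RInt (a b : Rbar) (F : R -> R) (x0 x : R) :
  (forall t, in_open a b t -> continuous F t) ->
  in_open a b x0 -> in_open a b x -> is_derive (RInt F x0) x (F x).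
Proof.
  intros HF Hx0 Hx. apply (is_derive_RInt F (RInt F x0) x0 x); [|exact (HF x Hx)].
  apply (filter_imp (in_open a b)); [|exact (in_open_locally a b x Hx)].
  intros u Hu. apply (RInt_correct (V:=R_CompleteNormedModule)).
  apply (ex_RInt_continuous (V:=R_CompleteNormedModule)).
  intros z Hz. exact (HF z (in_open_between a b x0 u z Hx0 Hu Hz)).
Qed.

Section Riccati.

Variables (a b : Rbar) (C : R) (mu : R -> R).
Hypothesis in_open0 : in_open a b 0.
Hypothesis is_derive_mu : forall x, in_open a b x -> is_derive mu x (mu x ^ 2 + C).

Lemma continuous_mu x : in_open a b x -> continuous mu x.
Proof.
  intro Hx. apply (ex_derive_continuous (V:=R_NormedModule)).
  eexists. exact (is_derive_mu x Hx).
Qed.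

Lemma is_derive_RInt_mu x : in_open a b x -> is_derive (RInt mu 0) x (mu x).
Proof. exact (in_open_is_derive_RInt a b mu 0 x continuous_mu in_open0). Qed.

Lemma RInt_mu_0 : RInt mu 0 0 = 0.
Proof. exact (RInt_point 0 mu). Qed.

Lemma riccati_first_integral x : in_open a b x ->
  mu x ^ 2 + C = (mu 0 ^ 2 + C) * exp (2 * RInt mu 0 x).
Proof.
  intro Hx.
  set (phi := fun t => (mu t ^ 2 + C) * exp (- (2 * RInt mu 0 t))).
  assert (Hphi : phi x = phi 0).
  { apply (in_open_derive0_eq a b phi x 0); [|exact Hx|exact in_open0].
    intros t Ht. eapply is_derive_eq.
    - apply (is_derive_mult (fun t => mu t ^ 2 + C)); [| |intros; apply Rmult_comm].
      + apply (is_derive_plus (fun t => mu t ^ 2) (fun _ => C)).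
        * exact (is_derive_pow mu 2 t _ (is_derive_mu t Ht)).
        * apply is_derive_const.
      + apply is_derive_exp_comp, (is_derive_opp (fun t => 2 * RInt mu 0 t)).
        apply is_derive_scal, is_derive_RInt_mu, Ht.
    - unfold plus, opp, zero, mult; simpl. ring. }
  unfold phi in Hphi. rewrite RInt_mu_0, Rmult_0_r, Ropp_0, exp_0, Rmult_1_r in Hphi.
  rewrite <- Hphi, Rmult_assoc, <- exp_plus.
  replace (- (2 * RInt mu 0 x) + 2 * RInt mu 0 x) with 0 by ring.
  rewrite exp_0. ring.
Qed.

Variables (d f0 : R).

Let f x := d * RInt (fun y => exp (2 * RInt mu 0 y)) 0 x + f0.

Lemma riccati_f_0 : f 0 = f0.
Proof. unfold f. rewrite (RInt_point (V:=R_CompleteNormedModule)). unfold zero; simpl. ring. Qed.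

Lemma is_derive_riccati_f x : in_open a b x ->
  is_derive f x (d * exp (2 * RInt mu 0 x)).
Proof.
  intro Hx. eapply is_derive_eq.
  - apply (is_derive_plus _ (fun _ => f0)); [apply is_derive_scal|apply is_derive_const].
    apply (in_open_is_derive_RInt a b _ 0 x); [|exact in_open0|exact Hx].
    intros t Ht. apply (ex_derive_continuous (V:=R_NormedModule)). eexists.
    apply is_derive_exp_comp, is_derive_scal, is_derive_RInt_mu, Ht.
  - unfold plus, zero; simpl. ring.
Qed.

Lemma mu_affine_riccati_f : d <> 0 -> forall x, in_open a b x ->
  mu x = (mu 0 ^ 2 + C) / d * f x + (mu 0 - (mu 0 ^ 2 + C) / d * f0).
Proof.
  intros Hd x Hx. set (e1 := (mu 0 ^ 2 + C) / d).
  enough (Hconst : mu x - e1 * f x = mu 0 - e1 * f 0) by (rewrite riccati_f_0 in Hconst; lra).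
  apply (in_open_derive0_eq a b (fun t => mu t - e1 * f t)); [|exact Hx|exact in_open0].
  intros t Ht. eapply is_derive_eq.
  - apply (is_derive_minus mu (fun t => e1 * f t)); [exact (is_derive_mu t Ht)|].
    apply is_derive_scal, is_derive_riccati_f, Ht.
  - rewrite riccati_first_integral by exact Ht.
    unfold minus, plus, opp; simpl. unfold e1. field. exact Hd.
Qed.

Lemma riccati_f_derive_quadratic : exists e1 e2 e3 : R,
  forall x, in_open a b x -> is_derive f x (e1 * f x ^ 2 + e2 * f x + e3).
Proof.
  destruct (Req_dec d 0) as [Hd|Hd].
  { exists 0, 0, 0. intros x Hx. eapply is_derive_eq.
    - exact (is_derive_riccati_f x Hx).
    - rewrite Hd. ring. }
  set (e1 := (mu 0 ^ 2 + C) / d).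
  set (e2 := 2 * (mu 0 - e1 * f0)).
  set (e3 := d - e1 * f0 ^ 2 - e2 * f0).
  exists e1, e2, e3. intros x Hx.
  set (E := fun t => d * exp (2 * RInt mu 0 t)).
  set (Q := fun t => e1 * f t ^ 2 + e2 * f t + e3).
  (* e3 makes E 0 = Q 0 = d, and (E - Q)' = (2 μ - 2 e1 f - e2) E = 0 as μ = e1 f + e2 / 2. *)
  assert (HEQ : E x - Q x = E 0 - Q 0).
  { apply (in_open_derive0_eq a b (fun t => E t - Q t)); [|exact Hx|exact in_open0].
    intros t Ht. eapply is_derive_eq.
    - apply (is_derive_minus E Q).
      + apply is_derive_scal, is_derive_exp_comp, is_derive_scal, is_derive_RInt_mu, Ht.
      + apply (is_derive_plus (fun t => e1 * f t ^ 2 + e2 * f t) (fun _ => e3));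
          [|apply is_derive_const].
        apply (is_derive_plus (fun t => e1 * f t ^ 2) (fun t => e2 * f t)).
        * apply (is_derive_scal (fun t => f t ^ 2)), is_derive_pow, is_derive_riccati_f, Ht.
        * apply is_derive_scal, is_derive_riccati_f, Ht.
    - rewrite (mu_affine_riccati_f Hd t Ht).
      unfold minus, plus, opp, zero, mult; simpl. unfold e2, e1. field. exact Hd. }
  eapply is_derive_eq; [exact (is_derive_riccati_f x Hx)|].
  assert (HE0 : E 0 = d) by (unfold E; rewrite RInt_mu_0, Rmult_0_r, exp_0; ring).
  fold (E x). unfold Q in HEQ. rewrite riccati_f_0, HE0 in HEQ.
  unfold e3 in *. lra.
Qed.

Let g x := exp (- RInt mu 0 x).

Lemma is_derive_riccati_g x : in_open a b x -> is_derive g x (- mu x * g x).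
Proof.
  intro Hx. eapply is_derive_eq.
  - apply is_derive_exp_comp, (is_derive_opp (RInt mu 0)), is_derive_RInt_mu, Hx.
  - unfold g, opp; simpl. ring.
Qed.

Lemma is_derive_Derive_riccati_g x : in_open a b x ->
  is_derive (Derive g) x (- (C * g x)).
Proof.
  intro Hx. apply (is_derive_ext_loc (fun t => - mu t * g t)).
  - apply (filter_imp (in_open a b)); [|exact (in_open_locally a b x Hx)].
    intros t Ht. symmetry. exact (is_derive_unique _ _ _ (is_derive_riccati_g t Ht)).
  - eapply is_derive_eq.
    + apply (is_derive_mult (fun t => - mu t) g); [| |intros; apply Rmult_comm].
      * exact (is_derive_opp _ _ _ (is_derive_mu x Hx)).
      * exact (is_derive_riccati_g x Hx).
    + unfold plus, opp, mult; simpl. ring.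
Qed.

Lemma riccati_g_0 : g 0 = 1.
Proof. unfold g. rewrite RInt_mu_0, Ropp_0. exact exp_0. Qed.

End Riccati.

Theorem lemma2p1 (C mu0 d f0 : R) (a b : Rbar) (mu : R -> R)
  (Ha : Rbar_lt a 0) (Hb : Rbar_lt 0 b)
  (Hmu : forall x, in_open a b x -> is_derive mu x (mu x ^ 2 + C))
  (Hmu0 : mu 0 = mu0) :
  let f := fun x => d * RInt (fun y => exp (2 * RInt mu 0 y)) 0 x + f0 in
  let g := fun x => exp (- RInt mu 0 x) in
  (exists e1 e2 e3 : R,
     (forall x, in_open a b x -> is_derive f x (e1 * f x ^ 2 + e2 * f x + e3))
     /\ f 0 = f0)
  /\ (forall x, in_open a b x ->
        ex_derive g x /\ is_derive (Derive g) x (- (C * g x)))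
  /\ g 0 = 1 /\ Derive g 0 = - mu0.
Proof.
  intros f g.
  assert (H0 : in_open a b 0) by (split; assumption).
  split; [|split; [|split]].
  - destruct (riccati_f_derive_quadratic a b C mu H0 Hmu d f0) as (e1 & e2 & e3 & Hf).
    exists e1, e2, e3. split; [exact Hf|exact (riccati_f_0 mu d f0)].
  - intros x Hx. split.
    + eexists. exact (is_derive_riccati_g a b C mu H0 Hmu x Hx).
    + exact (is_derive_Derive_riccati_g a b C mu H0 Hmu x Hx).
  - exact (riccati_g_0 mu).
  - unfold g. rewrite (is_derive_unique _ _ _ (is_derive_riccati_g a b C mu H0 Hmu 0 H0)).
    rewrite riccati_g_0, Hmu0. ring.
Qed.
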